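(* Fix $K\ge 2$, $d\ge 1$ and $\alpha\in[0,1]$. Let $F_1,\dots,F_K$ be probability distributions on $\mathbb{R}^d$, and suppose that a signal set $L\subseteq[d]$ exists. Let $\mathcal{T}$ be a fixed (non-random) tree of subsets of $[d]$ satisfying properties (T1)–(T3) below. For each $n$, suppose the data consist of independent observations, $n_i$ of them from $F_i$ ($i=1,\dots,K$), $n=n_1+\dots+n_K$, and for every node $C$ of $\mathcal{T}$ let $p^C$ be the $p$-value of a test of $H_{0,C}$ computed from the submatrix $\mathbf{X}_C$. Assume: (i) (validity) for every node $C$ for which $H_{0,C}$ is true and every $u\in[0,1]$, $\mathbb{P}(p^C\le u)\le u$; (ii) (consistency at every level) for every node $C$ for which $H_{0,C}$ is false, $p^C\to 0$ in probability as $n\to\infty$. Let $S$ be the set of features selected by the GFS procedure at level $\alpha$. Then, as $n\to\infty$ with $d$ fixed, $$\mathbb{P}(L\subseteq S)\to 1,\qquad \mathbb{P}(S\setminus L\neq\emptyset)\le \alpha+o(1),\qquad \mathbb{E}\!\left[\frac{|S\setminus L|}{\max\{|S|,1\}}\right]\le \alpha+o(1).$$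
   Context: Notation: $[d]=\{1,\dots,d\}$. $\mathbf{X}$ is the $n\times d$ data matrix whose rows are the observations; for $C\subseteq[d]$, $\mathbf{X}_C$ is the submatrix consisting of the columns indexed by $C$. For $B\subseteq[d]$ and $X=(X_1,\dots,X_d)\sim F_i$, let $F_{i[B]}$ denote the joint distribution of $(X_j)_{j\in B}$, and let $H_{0,B}$ be the hypothesis $F_{1[B]}=F_{2[B]}=\dots=F_{K[B]}$. Signal set: a set $L\subseteq[d]$ such that (1) $H_{0,L^c}$ is true, and (2) for every nonempty $L'\subseteq L$, $H_{0,L'}$ is false. Tree $\mathcal{T}$: a rooted binary tree whose nodes are subsets of $[d]$ such that (T1) the root is $[d]$; (T2) every non-leaf node $C$ has exactly two children, which are disjoint nonempty sets whose union is $C$; (T3) the leaves are singletons. Adjusted $p$-value of a node $C$: $p^C_{\mathrm{adj}}=p^C\cdot d/|C|$. A node $C$ is $\alpha$-terminal if $p^C_{\mathrm{adj}}\le\alpha$, $p^B_{\mathrm{adj}}\le\alpha$ for every ancestor $B$ of $C$, and $p^B_{\mathrm{adj}}>\alpha$ for every child $B$ of $C$ (the last condition is vacuous for leaves, the second for the root). GFS procedure at level $\alpha$: the selected set $S$ is the union of all $\alpha$-terminal nodes of $\mathcal{T}$ (empty if there are none). *)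

From HB Require Import structures.
From mathcomp Require Import all_boot all_order all_algebra.
From mathcomp Require Import all_classical all_reals all_analysis.

Set Implicit Arguments.
Unset Strict Implicit.
Unset Printing Implicit Defensive.

Import Order.TTheory GRing.Theory Num.Theory.
Local Open Scope ring_scope.

(** Observations live in R^d, represented as d.-tuple R with the product
    sigma-algebra (generated by the coordinates), as provided by the library. *)

Section Distributions.
Variables (R : realType) (d K : nat).

(** Coordinate projection x |-> (x_j)_{j in B}  (coordinates of B in
    increasing order). *)
Definition proj_coords (B : {set 'I_d}) (x : d.-tuple R) : #|B|.-tuple R :=
  [tuple tnth x (enum_val k) | k < #|B|].

Definition marginal (F : 'I_K -> probability (d.-tuple R) R)
  (i : 'I_K) (B : {set 'I_d}) : set (#|B|.-tuple R) -> \bar R :=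
  pushforward (F i) (proj_coords B).

Definition H0 (F : 'I_K -> probability (d.-tuple R) R) (B : {set 'I_d}) : Prop :=
  forall (i k : 'I_K) (A : set (#|B|.-tuple R)),
    measurable A -> @marginal F i B A = @marginal F k B A.

Definition signal_set (F : 'I_K -> probability (d.-tuple R) R) (L : {set 'I_d}) : Prop :=
  H0 F (~: L) /\
  (forall L' : {set 'I_d}, L' != finset.set0 -> L' \subset L -> ~ H0 F L').

End Distributions.
Arguments marginal {R d K} F i B _.

(** Rooted binary trees whose nodes are labelled by subsets of [d]. *)
Inductive ftree (d : nat) : Type :=
| FLeaf of 'I_d
| FNode of ftree d & ftree d.

Section Trees.
Variable d : nat.

Fixpoint node_set (t : ftree d) : {set 'I_d} :=
  match t with
  | FLeaf j => [set j]
  | FNode l r => node_set l :|: node_set r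
  end.

Fixpoint nodes (t : ftree d) : seq {set 'I_d} :=
  match t with
  | FLeaf j => [:: [set j]]
  | FNode l r => node_set (FNode l r) :: (nodes l ++ nodes r)
  end.

Fixpoint child_pairs (t : ftree d) : seq ({set 'I_d} * {set 'I_d}) :=
  match t with
  | FLeaf _ => [::]
  | FNode l r =>
      (node_set l, node_set (FNode l r)) :: (node_set r, node_set (FNode l r))
        :: (child_pairs l ++ child_pairs r)
  end.

Fixpoint anc_pairs (t : ftree d) : seq ({set 'I_d} * {set 'I_d}) :=
  match t with
  | FLeaf _ => [::]
  | FNode l r =>
      [seq (node_set (FNode l r), C) | C <- nodes l ++ nodes r]
        ++ (anc_pairs l ++ anc_pairs r)
  end.

(** (T2): every internal node has two disjoint nonempty children whose
    union is the node (the union part and (T3) hold by construction). *)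
Fixpoint valid_tree (t : ftree d) : bool :=
  match t with
  | FLeaf _ => true
  | FNode l r =>
      [&& [disjoint node_set l & node_set r], node_set l != finset.set0,
          node_set r != finset.set0, valid_tree l & valid_tree r]
  end.

Definition is_feature_tree (t : ftree d) : bool :=
  (node_set t == [set: 'I_d]) && valid_tree t.

Variable R : realType.

Definition p_adj (p : {set 'I_d} -> R) (C : {set 'I_d}) : R :=
  p C * d%:R / #|C|%:R.

Definition alpha_terminal (t : ftree d) (alpha : R) (p : {set 'I_d} -> R)
    (C : {set 'I_d}) : bool :=
  [&& C \in nodes t,
      p_adj p C <= alpha,
      all (fun BC : {set 'I_d} * {set 'I_d} =>
             (BC.2 == C) ==> (p_adj p BC.1 <= alpha)) (anc_pairs t)
    & all (fun BC : {set 'I_d} * {set 'I_d} =>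
             (BC.2 == C) ==> (alpha < p_adj p BC.1)) (child_pairs t)].

Definition gfs (t : ftree d) (alpha : R) (p : {set 'I_d} -> R) : {set 'I_d} :=
  \bigcup_(C <- undup (nodes t) | alpha_terminal t alpha p C) C.

End Trees.

From HB Require Import structures.
From mathcomp Require Import all_boot all_order all_algebra.
From mathcomp Require Import all_classical all_reals all_analysis.
From mathcomp Require Import lra.
Import Order.TTheory GRing.Theory Num.Theory.
Import numFieldNormedType.Exports.
Local Open Scope ring_scope.
Set Implicit Arguments.
Unset Strict Implicit.

(* Call a node meeting L a signal node (its null hypothesis is false) and the
   maximal nodes disjoint from L the maximal null nodes (their nulls are true).
   By consistency, with probability tending to one all signal nodes are
   rejected.  On that event every leaf {l}, l in L, is alpha-terminal, so L is
   selected; moreover a terminal node meeting L is a leaf, since its child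
   through a signal feature is rejected, so a false selection comes from a
   terminal node disjoint from L and forces the rejection of a maximal null
   node M.  These nodes are disjoint, so by validity the probability of
   rejecting one is at most sum_M alpha |M| / d <= alpha.  The false discovery
   proportion is at most the indicator of a false selection. *)

Section FeatureTrees.
Variable d : nat.
Implicit Types (t : ftree d) (B C : {set 'I_d}).

Lemma node_set_neq0 t : node_set t != finset.set0.
Proof.
elim: t => [j|l IHl r IHr] /=; first by apply/set0Pn; exists j; rewrite inE.
by rewrite finset.setU_eq0 negb_and IHl.
Qed.

Lemma node_set_in_nodes t : node_set t \in nodes t.
Proof. by case: t => [j|l r] /=; rewrite inE eqxx. Qed.

Lemma nodes_sub_node_set t C : C \in nodes t -> C \subset node_set t.
Proof.
elim: t C => [j|l IHl r IHr] C /=; first by rewrite inE => /eqP ->.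
rewrite inE mem_cat => /orP[/eqP->//|/orP[/IHl|/IHr] sC].
- exact: fintype.subset_trans sC (finset.subsetUl _ _).
- exact: fintype.subset_trans sC (finset.subsetUr _ _).
Qed.

Lemma nodes_neq0 t C : C \in nodes t -> C != finset.set0.
Proof.
elim: t C => [j|l IHl r IHr] C /=.
  by rewrite inE => /eqP ->; apply/set0Pn; exists j; rewrite inE.
rewrite inE mem_cat => /orP[/eqP->|/orP[/IHl|/IHr]] //.
exact: (node_set_neq0 (FNode l r)).
Qed.

Lemma leaf_in_nodes t j : j \in node_set t -> [set j] \in nodes t.
Proof.
elim: t => [k|l IHl r IHr] /=; first by rewrite !inE => /eqP ->.
by rewrite inE => /orP[/IHl|/IHr] jC; rewrite inE mem_cat jC ?orbT.
Qed.

Lemma anc_pairs_sub t B C : (B, C) \in anc_pairs t -> B \in nodes t /\ C \subset B.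
Proof.
elim: t => [k|l IHl r IHr] //=; rewrite mem_cat => /orP[/mapP[C' C'lr [-> ->]]|].
  by split; [rewrite inE eqxx | apply: (nodes_sub_node_set (t := FNode l r)); rewrite /= inE C'lr orbT].
by rewrite mem_cat => /orP[/IHl|/IHr] [BT CB]; split => //; rewrite inE mem_cat BT ?orbT.
Qed.

Lemma child_pairs_nodes t B C :
  (B, C) \in child_pairs t -> B \in nodes t /\ C \in nodes t.
Proof.
elim: t => [k|l IHl r IHr] //=.
rewrite !in_cons => /orP[/eqP[-> ->]|/orP[/eqP[-> ->]|]];
  try by split; rewrite ?eqxx ?mem_cat ?node_set_in_nodes ?orbT.
by rewrite mem_cat => /orP[/IHl|/IHr] [BT CT]; rewrite !mem_cat BT CT ?orbT.
Qed.

Lemma child_pairs_proper t B C :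
  valid_tree t -> (B, C) \in child_pairs t -> B \proper C.
Proof.
have properU (A A' : {set 'I_d}) : [disjoint A & A'] -> A' != finset.set0 -> A \proper A :|: A'.
  move=> dis nA'; apply: finset.properUl; apply: contra nA' => /finset.setIidPl <-.
  by rewrite finset.setIC finset.disjoint_setI0.
elim: t => [k|l IHl r IHr] //= /and5P[dis nl nr vl vr].
rewrite !in_cons => /orP[/eqP[-> ->]|/orP[/eqP[-> ->]|]]; first exact: properU.
  by rewrite finset.setUC; apply: properU; rewrite // disjoint_sym.
by rewrite mem_cat => /orP[/IHl|/IHr]; apply.
Qed.

Lemma child_pairs_leaf t B j : valid_tree t -> (B, [set j]) \notin child_pairs t.
Proof.
move=> vt; apply/negP => BjT; have [/nodes_neq0 nB _] := child_pairs_nodes BjT.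
move: (child_pairs_proper vt BjT) nB.
by rewrite finset.properEcard cards1 ltnS leqn0 cards_eq0 => /andP[_ ->].
Qed.

Lemma child_pairs_cover t C j : C \in nodes t -> j \in C -> C != [set j] ->
  exists2 B, (B, C) \in child_pairs t & j \in B.
Proof.
elim: t C => [k|l IHl r IHr] C /=.
  by rewrite inE => /eqP ->; rewrite inE => /eqP ->; rewrite eqxx.
rewrite inE mem_cat => /orP[/eqP->|/orP[/IHl IH|/IHr IH]] jC nCj.
- case/setUP: jC => [jl|jr]; first by exists (node_set l); rewrite ?inE ?eqxx.
  by exists (node_set r); rewrite ?inE ?eqxx ?orbT.
- by have [B BC jB] := IH jC nCj; exists B; rewrite // !inE mem_cat BC !orbT.
- by have [B BC jB] := IH jC nCj; exists B; rewrite // !inE mem_cat BC !orbT.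
Qed.

End FeatureTrees.

Section MaximalNodes.
Variables (d : nat) (A : {set 'I_d}).

Fixpoint max_nodes_in (t : ftree d) : seq {set 'I_d} :=
  if node_set t \subset A then [:: node_set t] else
  match t with
  | FLeaf _ => [::]
  | FNode l r => max_nodes_in l ++ max_nodes_in r
  end.

Lemma max_nodes_inP t M : M \in max_nodes_in t -> M \in nodes t /\ M \subset A.
Proof.
elim: t => [k|l IHl r IHr] /=; case: ifP => sA //;
  try by rewrite mem_seq1 => /eqP ->; split; rewrite ?inE ?eqxx.
by rewrite mem_cat => /orP[/IHl|/IHr] [MT MA]; rewrite inE mem_cat MT ?orbT.
Qed.

(* The maximal nodes inside [A] are pairwise disjoint. *)
Lemma sum_card_max_nodes_in t :
  valid_tree t -> (\sum_(M <- max_nodes_in t) #|M| <= #|node_set t|)%N.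
Proof.
elim: t => [k|l IHl r IHr] /=; first by case: ifP => _ _; rewrite ?big_cons ?big_nil ?addn0.
move=> /and5P[dis _ _ vl vr]; case: ifP => _; first by rewrite big_cons big_nil addn0.
rewrite big_cat cardsU finset.disjoint_setI0 // cards0 subn0.
exact: leq_add (IHl vl) (IHr vr).
Qed.

Lemma max_nodes_in_cover t C : C \in nodes t -> C \subset A ->
  exists2 M, M \in max_nodes_in t & (M == C) || ((M, C) \in anc_pairs t).
Proof.
elim: t C => [k|l IHl r IHr] C /=.
  by rewrite inE => /eqP -> ->; exists [set k]; rewrite ?inE ?eqxx.
rewrite inE mem_cat => CT CA; case: ifP => lrA.
  exists (node_set l :|: node_set r); first by rewrite inE.
  case/orP: CT => [/eqP->|CT]; first by rewrite eqxx.
  by apply/orP; right; rewrite mem_cat; apply/orP; left; apply/mapP; exists C; rewrite ?mem_cat.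
case/orP: CT => [/eqP CT|/orP[CT|CT]]; first by move: CA; rewrite CT lrA.
- have [M Ml MC] := IHl C CT CA; exists M; first by rewrite mem_cat Ml.
  by case/orP: MC => [->//|MC]; rewrite !mem_cat MC !orbT.
- have [M Mr MC] := IHr C CT CA; exists M; first by rewrite mem_cat Mr orbT.
  by case/orP: MC => [->//|MC]; rewrite !mem_cat MC !orbT.
Qed.

End MaximalNodes.

Section GFSRejections.
Variables (R : realType) (d : nat) (T : ftree d) (alpha : R).
Implicit Types (p : {set 'I_d} -> R) (C : {set 'I_d}).

Lemma gfsP p j :
  reflect (exists2 C, alpha_terminal T alpha p C & j \in C) (j \in gfs T alpha p).
Proof.
rewrite /gfs -big_filter finset.bigcup_seq.
apply: (iffP bigcupP) => [[C]|[C tC jC]].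
  by rewrite mem_filter => /andP[tC _] jC; exists C.
by exists C => //; rewrite mem_filter tC mem_undup; case/and4P: tC.
Qed.

Variable L : {set 'I_d}.

Definition signal_nodes_rejected p :=
  forall C, C \in nodes T -> C :&: L != finset.set0 -> p_adj p C <= alpha.

Hypotheses (T_root : node_set T = [set: 'I_d]) (T_valid : valid_tree T).

Lemma signal_sub_gfs p : signal_nodes_rejected p -> L \subset gfs T alpha p.
Proof.
move=> rejL; apply/fintype.subsetP => j jL.
have rej_j B : B \in nodes T -> j \in B -> p_adj p B <= alpha.
  by move=> BT jB; apply: rejL => //; apply/set0Pn; exists j; rewrite inE jB.
apply/gfsP; exists [set j]; last by rewrite inE.
have jT : [set j] \in nodes T by apply: leaf_in_nodes; rewrite T_root inE.
apply/and4P; split => //; first by apply: rej_j; rewrite ?inE.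
  apply/allP => -[B C] /= BC; apply/implyP => /eqP eC; subst C.
  have [BT /fintype.subsetP jB] := anc_pairs_sub BC.
  by apply: rej_j => //; apply: jB; rewrite inE.
apply/allP => -[B C] /= BC; apply/implyP => /eqP eC; subst C.
by move: BC; rewrite (negbTE (child_pairs_leaf _ _ T_valid)).
Qed.

Lemma terminal_signal_leaf p C l : signal_nodes_rejected p ->
  alpha_terminal T alpha p C -> l \in C -> l \in L -> C = [set l].
Proof.
move=> rejL /and4P[CT _ _ /allP term] lC lL; apply/eqP/negPn/negP => nCl.
have [B BC lB] := child_pairs_cover CT lC nCl.
have [BT _] := child_pairs_nodes BC.
have := term _ BC; rewrite /= eqxx /= ltNge => /negP; apply.
by apply: rejL => //; apply/set0Pn; exists l; rewrite inE lB.
Qed.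

Lemma gfs_false_selection p : signal_nodes_rejected p ->
  gfs T alpha p :\: L != finset.set0 ->
  exists2 M, M \in max_nodes_in (~: L) T & p_adj p M <= alpha.
Proof.
move=> rejL /set0Pn[j]; rewrite inE => /andP[jL /gfsP[C tC jC]].
have CL : C \subset ~: L.
  apply/fintype.subsetP => l lC; rewrite inE; apply/negP => lL.
  by move: jC jL; rewrite (terminal_signal_leaf rejL tC lC lL) inE => /eqP ->; rewrite lL.
case/and4P: tC => CT pC /allP anc _.
have [M Mmax MC] := max_nodes_in_cover CT CL; exists M => //.
case/orP: MC => [/eqP->//|MC].
by have := anc _ MC; rewrite /= eqxx.
Qed.

End GFSRejections.

Section RejectionPattern.
Variables (d : nat) (T : ftree d).

Definition gfs_pattern (rej : {ffun {set 'I_d} -> bool}) : {set 'I_d} :=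
  \bigcup_(C <- undup (nodes T) | [&& C \in nodes T, rej C,
      all (fun BC : {set 'I_d} * {set 'I_d} => (BC.2 == C) ==> rej BC.1) (anc_pairs T)
    & all (fun BC : {set 'I_d} * {set 'I_d} => (BC.2 == C) ==> ~~ rej BC.1)
        (child_pairs T)]) C.

Lemma gfs_patternE (R : realType) (alpha : R) p :
  gfs T alpha p = gfs_pattern [ffun C => p_adj p C <= alpha].
Proof.
apply: eq_bigl => C; rewrite /alpha_terminal ffunE; congr [&& _, _, _ & _].
  by apply: eq_all => BC; rewrite ffunE.
by apply: eq_all => BC; rewrite ffunE ltNge.
Qed.

End RejectionPattern.

Local Open Scope classical_set_scope.

Lemma H0_subset (R : realType) (d K : nat) (F : 'I_K -> probability (d.-tuple R) R)
    (B B' : {set 'I_d}) :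
  B' \subset B -> H0 F B -> H0 F B'.
Proof.
move=> sB H0B i k A mA.
have B'B (k' : 'I_#|B'|) : enum_val (A := mem B') k' \in B.
  by apply: (fintype.subsetP sB); exact: enum_valP.
pose g (y : #|B|.-tuple R) :=
  [tuple tnth y (enum_rank_in (B'B k') (enum_val k')) | k' < #|B'|].
have mg : measurable_fun setT g.
  apply/measurable_fun_tnthP => k'.
  have -> : @tnth _ R ^~ k' \o g = @tnth _ R ^~ (enum_rank_in (B'B k') (enum_val k')).
    by apply: funext => y /=; rewrite tnth_mktuple.
  exact: measurable_tnth.
have projB' : proj_coords B' = g \o proj_coords B.
  apply: funext => x; apply: eq_from_tnth => k' /=.
  by rewrite !tnth_mktuple enum_rankK_in.
have mgA : measurable (g @^-1` A) by rewrite -[g @^-1` A]setTI; exact: mg.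
rewrite /marginal /pushforward projB' !comp_preimage; exact: (H0B i k _ mgA).
Qed.

Section Events.
Context (dO : measure_display) (Om : measurableType dO) (R : realType).

Lemma measurable_ler_cst (f : Om -> R) (a : R) :
  measurable_fun setT f -> measurable [set w | f w <= a].
Proof.
move=> mf; rewrite -[X in measurable X]setTI.
exact: (measurable_fun_le measurableT mf (measurable_cst a)).
Qed.

Lemma measurable_cst_ler_norm (f : Om -> R) (a : R) :
  measurable_fun setT f -> measurable [set w | a <= `|f w|].
Proof.
move=> mf; rewrite -[X in measurable X]setTI.
by apply: measurable_fun_le => //; exact: measurableT_comp.
Qed.

Lemma measurable_ffun_ler (I : finType) (f : I -> Om -> R) (a : R)
    (Q : {ffun I -> bool} -> Prop) :
  (forall i, measurable_fun setT (f i)) ->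
  measurable [set w | Q [ffun i => f i w <= a]].
Proof.
move=> mf.
have -> : [set w | Q [ffun i => f i w <= a]] =
    \bigcup_(b in Q) \bigcap_(i in setT) ((fun w => f i w <= a) @^-1` [set b i]).
  apply/seteqP; split => [w Qw|w [b Qb fb]].
    by exists [ffun i => f i w <= a] => // i _; rewrite /= ffunE.
  suff eb : b = [ffun i => f i w <= a] by move: Qb; rewrite eb.
  by apply/ffunP => i; rewrite ffunE; exact/esym/fb.
apply: fin_bigcup_measurable; first exact: finite_finset.
move=> b _; apply: fin_bigcap_measurable; first exact: finite_finset.
move=> i _; rewrite -[X in measurable X]setTI.
exact: (measurable_realfun.measurable_fun_ler (mf i) (measurable_cst a) measurableT).
Qed.

Lemma le_mu_bigsetU_seq (mu : {measure set Om -> \bar R}) (I : Type) (s : seq I)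
    (A : I -> set Om) :
  (forall i, measurable (A i)) ->
  (mu (\big[setU/set0]_(i <- s) A i) <= \sum_(i <- s) mu (A i))%E.
Proof.
move=> mA; elim: s => [|i s IH]; first by rewrite !big_nil measure0.
rewrite !big_cons; apply: le_trans (measureU2 _ (mA i) _) _.
  exact: bigsetU_measurable.
exact: leeD2l.
Qed.

Lemma probability_fineK (mu : probability Om R) (A : set Om) :
  measurable A -> (fine (mu A))%:E = mu A.
Proof.
move=> mA; rewrite fineK // ge0_fin_numE ?measure_ge0 //.
by apply: le_lt_trans (probability_le1 _ mA) _; rewrite ltry.
Qed.

Lemma integral_fdp_le (I : finType) (mu : {measure set Om -> \bar R})
    (S : Om -> {set I}) (L : {set I}) :
  (forall Q : {set I} -> Prop, measurable [set w | Q (S w)]) ->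
  (\int[mu]_w (#|S w :\: L|%:R / (maxn #|S w| 1)%:R)%:E
     <= mu [set w | S w :\: L != finset.set0])%E.
Proof.
move=> mS; have mFS := mS (fun X => X :\: L != finset.set0).
rewrite -[X in mu X]setIT -integral_indic //.
apply: ge0_le_integral => //.
- move=> _ Y mY; rewrite setTI.
  exact: (mS (fun X => Y (#|X :\: L|%:R / (maxn #|X| 1)%:R)%:E)).
- by apply/measurable_realfun.measurable_EFinP; exact: measurable_realfun.measurable_indic.
move=> w _; rewrite lee_fin indicE.
have [->|SL] := eqVneq (S w :\: L) finset.set0; first by rewrite cards0 mul0r.
rewrite mem_set // ler_pdivrMr ?ltr0n ?leq_max ?orbT // mul1r ler_nat.
exact: leq_trans (subset_leq_card (finset.subsetDl _ _)) (leq_maxl _ _).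
Qed.

End Events.

Lemma cvg_sum_seq0 (R : numFieldType) (I : eqType) (s : seq I) (u : I -> nat -> R) :
  (forall i, i \in s -> u i @ \oo --> 0) ->
  (fun n => \sum_(i <- s) u i n) @ \oo --> 0.
Proof.
elim: s => [_|i s IH cu].
  rewrite (_ : (fun n => _) = fun=> 0); first exact: cvg_cst.
  by apply: funext => n; rewrite big_nil.
rewrite (_ : (fun n => _) = u i + fun n => \sum_(j <- s) u j n); last first.
  by apply: funext => n; rewrite big_cons.
rewrite -[X in _ --> X]addr0; apply: cvgD; first by apply: cu; rewrite mem_head.
by apply: IH => j js; apply: cu; rewrite in_cons js orbT.
Qed.

Section GFSAsymptotics.
(* Keeps the sample-size index [n] of the event families explicit. *)
Local Set Strict Implicit.
Context {R : realType} {K d : nat} {alpha : R}.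
Hypotheses (Hd : (1 <= d)%N) (Halpha : 0 < alpha <= 1).
Context {F : 'I_K -> probability (d.-tuple R) R} {L : {set 'I_d}}.
Hypothesis HL : signal_set F L.
Context {T : ftree d}.
Hypothesis HT : is_feature_tree T.
Context {dO : measure_display} {Omega : nat -> measurableType dO}
  {P : forall n, probability (Omega n) R}
  {p : forall n, {set 'I_d} -> Omega n -> R}.
Hypothesis p_meas : forall n C, measurable_fun setT (p n C).
Hypothesis p_valid : forall C, C \in nodes T -> H0 F C ->
  forall n (u : R), 0 <= u <= 1 -> (P n [set w | (p n C w <= u)%R] <= u%:E)%E.
Hypothesis p_consistent : forall C, C \in nodes T -> ~ H0 F C ->
  forall eps : R, 0 < eps -> (fun n => P n [set w | eps <= `|p n C w|]) @ \oo --> 0%E.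

Let T_root : node_set T = [set: 'I_d]%SET. Proof. by case/andP: HT => /eqP. Qed.
Let T_valid : valid_tree T. Proof. by case/andP: HT. Qed.
Let alpha_gt0 : 0 < alpha. Proof. by case/andP: Halpha. Qed.
Let alpha_le1 : alpha <= 1. Proof. by case/andP: Halpha. Qed.
Let d_gt0 : 0 < d%:R :> R. Proof. by rewrite ltr0n. Qed.

Let S n (w : Omega n) := gfs T alpha (fun C => p n C w).

Lemma measurable_selected n (Q : {set 'I_d} -> Prop) :
  measurable [set w | Q (S n w)].
Proof.
have -> : [set w | Q (S n w)] = [set w | (Q \o gfs_pattern T)
    [ffun C => p n C w * d%:R / #|C|%:R <= alpha]].
  by apply/seteqP; split => w; rewrite /= /S gfs_patternE.
apply: measurable_ffun_ler => C.
by do 2 apply: measurable_realfun.measurable_funM => //.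
Qed.

Definition threshold (C : {set 'I_d}) : R := alpha * #|C|%:R / d%:R.

Lemma threshold_gt0 C : C \in nodes T -> 0 < threshold C.
Proof.
by move=> /nodes_neq0; rewrite -card_gt0 => C_gt0; rewrite !mulr_gt0 ?invr_gt0 ?ltr0n.
Qed.

Lemma threshold_le1 C : threshold C <= 1.
Proof.
rewrite ler_pdivrMr // mul1r.
apply: le_trans (ler_piMl (ler0n _ #|C|) alpha_le1) _.
by rewrite ler_nat -[leqRHS]card_ord max_card.
Qed.

Lemma p_adj_le_threshold (q : {set 'I_d} -> R) C : C \in nodes T ->
  (p_adj q C <= alpha) = (q C <= threshold C).
Proof.
move=> /nodes_neq0; rewrite -card_gt0 -(ltr0n R) => C_gt0.
by rewrite /p_adj /threshold ler_pdivrMr // ler_pdivlMr // mulrAC.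
Qed.

Definition signal_nodes := [seq C <- undup (nodes T) | C :&: L != finset.set0].

Lemma signal_node_not_H0 C : C \in signal_nodes -> C \in nodes T /\ ~ H0 F C.
Proof.
rewrite mem_filter mem_undup => /andP[CL CT]; split => // H0C.
apply: HL.2 CL (finset.subsetIr _ _) _.
exact: H0_subset (finset.subsetIl _ _) H0C.
Qed.

Definition max_null_nodes := max_nodes_in (~: L) T.

Lemma max_null_node_H0 M : M \in max_null_nodes -> H0 F M.
Proof. by case/max_nodes_inP => _ ML; exact: H0_subset ML HL.1. Qed.

Definition pvalue_ge n C := [set w : Omega n | threshold C <= `|p n C w|].

Definition signal_miss n := \big[setU/set0]_(C <- signal_nodes) pvalue_ge n C.

Definition null_rejected n :=
  \big[setU/set0]_(M <- max_null_nodes) [set w : Omega n | p n M w <= threshold M].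

Lemma measurable_signal_miss n : measurable (signal_miss n).
Proof. by apply: bigsetU_measurable => C _; exact: measurable_cst_ler_norm. Qed.

Lemma measurable_null_rejected n : measurable (null_rejected n).
Proof. by apply: bigsetU_measurable => M _; exact: measurable_ler_cst. Qed.

Definition miss_bound n := \sum_(C <- signal_nodes) fine (P n (pvalue_ge n C)).

Lemma err_cvg0 : miss_bound @ \oo --> 0.
Proof.
apply: cvg_sum_seq0 => C /signal_node_not_H0[CT nH0C].
by have /fine_cvgP[] := p_consistent CT nH0C _ (threshold_gt0 C CT).
Qed.

Lemma prob_signal_miss_le n : (P n (signal_miss n) <= (miss_bound n)%:E)%E.
Proof.
have mmiss C : measurable (pvalue_ge n C) by exact: measurable_cst_ler_norm.
apply: le_trans (le_mu_bigsetU_seq _ _ mmiss) _.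
by rewrite /miss_bound -sumEFin; apply: lee_sum => C _; rewrite probability_fineK.
Qed.

Lemma signal_nodes_rejected_off_miss n w :
  ~ signal_miss n w -> signal_nodes_rejected T alpha L (fun C => p n C w).
Proof.
move=> nmiss C CT CL; rewrite p_adj_le_threshold //.
apply: le_trans (ler_norm _) _; apply/ltW; rewrite ltNge; apply/negP => missC.
apply: nmiss; rewrite /signal_miss -bigcup_seq; exists C => //.
by rewrite /= mem_filter CL mem_undup.
Qed.

Lemma prob_null_rejected_le n : (P n (null_rejected n) <= alpha%:E)%E.
Proof.
have mrej M : measurable [set w : Omega n | p n M w <= threshold M].
  exact: measurable_ler_cst.
apply: le_trans (le_mu_bigsetU_seq _ _ mrej) _.
apply: (@le_trans _ _ (\sum_(M <- max_null_nodes) (threshold M)%:E)%E).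
  rewrite big_seq [leRHS]big_seq; apply: lee_sum => M Mmax.
  have [MT _] := max_nodes_inP Mmax.
  apply: p_valid => //; first exact: max_null_node_H0.
  by rewrite ltW ?threshold_gt0 ?threshold_le1.
rewrite sumEFin lee_fin /threshold -mulr_suml -mulr_sumr -natr_sum.
rewrite ler_pdivrMr // ler_pM2l // ler_nat.
by apply: leq_trans (sum_card_max_nodes_in _ T_valid) _; rewrite T_root cardsT card_ord.
Qed.

Lemma prob_signal_selected_ge n : 1 - miss_bound n <= fine (P n [set w | L \subset S n w]).
Proof.
have mA := measurable_selected n (fun X => L \subset X).
have : (P n (~` [set w | L \subset S n w]) <= (miss_bound n)%:E)%E.
  apply: le_trans (prob_signal_miss_le n); apply: le_measure; rewrite ?inE.
  - exact: measurableC.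
  - exact: measurable_signal_miss.
  move=> w /= nLS; apply: contrapT => nmiss; apply: nLS.
  by apply: signal_sub_gfs => //; exact: signal_nodes_rejected_off_miss.
by rewrite probability_setC // -(probability_fineK (P n) mA) -EFinB lee_fin; lra.
Qed.

Lemma signal_selected_cvg1 : (fun n => P n [set w | L \subset S n w]) @ \oo --> 1%E.
Proof.
have fin n := probability_fineK (P n) (measurable_selected n (fun X => L \subset X)).
apply/fine_cvgP; split; first by apply: nearW => n; rewrite -fin.
apply: (squeeze_cvgr (f := fun n => 1 - miss_bound n) (h := fun=> 1)); last exact: cvg_cst.
  apply: nearW => n /=; rewrite prob_signal_selected_ge -lee_fin fin.
  exact: probability_le1 (measurable_selected n (fun X => L \subset X)).
by rewrite -[X in _ --> X]subr0; apply: cvgB; [exact: cvg_cst | exact: err_cvg0].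
Qed.

Lemma fwer_le n :
  (P n [set w | S n w :\: L != finset.set0] <= (alpha + miss_bound n)%:E)%E.
Proof.
apply: (@le_trans _ _ (P n (signal_miss n `|` null_rejected n))).
  apply: le_measure; rewrite ?inE.
  - exact: measurable_selected n (fun X => X :\: L != finset.set0).
  - exact: measurableU (measurable_signal_miss n) (measurable_null_rejected n).
  move=> w /= FS; have [|nmiss] := pselect (signal_miss n w); first by left.
  have [M Mmax pM] := gfs_false_selection (signal_nodes_rejected_off_miss nmiss) FS.
  right; rewrite /null_rejected -bigcup_seq; exists M => //=.
  have [MT _] := max_nodes_inP Mmax.
  by rewrite -(p_adj_le_threshold (fun C => p n C w) M MT).
apply: le_trans (measureU2 _ (measurable_signal_miss n) (measurable_null_rejected n)) _.
by rewrite EFinD addeC; apply: leeD; [exact: prob_signal_miss_le | exact: prob_null_rejected_le].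
Qed.

Lemma fwer_asymptotic : exists e : nat -> R, e @ \oo --> 0 /\
  forall n, (P n [set w | S n w :\: L != finset.set0] <= (alpha + e n)%:E)%E.
Proof. by exists miss_bound; split; [exact: err_cvg0 | exact: fwer_le]. Qed.

Lemma fdr_asymptotic : exists e : nat -> R, e @ \oo --> 0 /\
  forall n, (\int[P n]_w (#|S n w :\: L|%:R / (maxn #|S n w| 1)%:R)%:E
               <= (alpha + e n)%:E)%E.
Proof.
exists miss_bound; split => [|n]; first exact: err_cvg0.
apply: le_trans (fwer_le n); apply: integral_fdp_le; exact: measurable_selected.
Qed.

End GFSAsymptotics.

Theorem theorem1
  (R : realType) (K d : nat) (alpha : R)
  (HK : (2 <= K)%N) (Hd : (1 <= d)%N) (Halpha : 0 < alpha <= 1)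
  (F : 'I_K -> probability (d.-tuple R) R)
  (L : {set 'I_d}) (HL : signal_set F L)
  (T : ftree d) (HT : is_feature_tree T)
  (dO : measure_display) (Omega : nat -> measurableType dO)
  (P : forall n, probability (Omega n) R)
  (p : forall n, {set 'I_d} -> Omega n -> R)
  (p_meas : forall n C, measurable_fun setT (p n C))
  (p_valid : forall C, C \in nodes T -> H0 F C ->
     forall n (u : R), 0 <= u <= 1 ->
       (P n [set w | (p n C w <= u)%R] <= u%:E)%E)
  (p_consistent : forall C, C \in nodes T -> ~ H0 F C ->
     forall eps : R, 0 < eps ->
       (fun n => P n [set w | eps <= `|p n C w|]) @ \oo --> 0%E) :
  let S n (w : Omega n) := gfs T alpha (fun C => p n C w) in
  (fun n => P n [set w | L \subset S n w]) @ \oo --> 1%E /\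
  (exists e : nat -> R, e @ \oo --> 0 /\
     forall n, (P n [set w | S n w :\: L != finset.set0] <= (alpha + e n)%:E)%E) /\
  (exists e : nat -> R, e @ \oo --> 0 /\
     forall n, (\int[P n]_w (#|S n w :\: L|%:R / (maxn #|S n w| 1)%:R)%:E
                  <= (alpha + e n)%:E)%E).
Proof.
move=> S; split; first exact (signal_selected_cvg1 Hd Halpha HL HT p_meas p_consistent).
split; first exact (fwer_asymptotic Hd Halpha HL HT p_meas p_valid p_consistent).
exact (fdr_asymptotic Hd Halpha HL HT p_meas p_valid p_consistent).
Qed.
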